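(* Let $C\ge0$ and $a>0$ be real numbers, $g(\xi)=Ce^{-a|\xi|}$, and let $g_m$ be the $m$-fold normalized convolution of $g$ ($g_1=g$, $g_{m+1}=g_m*g$). Then for every integer $m\ge1$ and every $\xi\ne0$, $$g_m(\xi)=2\sqrt{aC}\left(\frac{C|\xi|}{2\pi}\right)^{m-1/2}\frac{K_{m-1/2}(a|\xi|)}{\Gamma(m)},$$ and consequently, for all $\xi\in\mathbb{R}$, $$g_m(\xi)\le C e^{-a|\xi|}\left(\frac{C}{\pi a}\right)^{m-1}\frac{\Gamma\!\left(\frac{1+a|\xi|}{2}+m-1\right)}{\Gamma(m)\,\Gamma\!\left(\frac{1+a|\xi|}{2}\right)} .$$
   Context: Convolution is normalized: $f*h(\xi)=\frac1{2\pi}\int_{\mathbb{R}}f(\eta)h(\xi-\eta)\,d\eta$. $K_\nu$ is the modified Bessel function of the second kind of order $\nu$. *)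

From Stdlib Require Import Reals Lra ClassicalEpsilon.
Open Scope R_scope.

Definition improper_integral_R (f : R -> R) (l : R) : Prop :=
  exists I : (forall a b : R, Riemann_integrable f a b),
    forall eps : R, 0 < eps ->
      exists M : R, forall a b : R, a <= - M -> M <= b ->
        Rabs (RiemannInt (I a b) - l) < eps.

Definition improper_integral_0_inf (f : R -> R) (l : R) : Prop :=
  exists I : (forall a b : R, 0 < a -> a <= b -> Riemann_integrable f a b),
    forall eps : R, 0 < eps ->
      exists d : R, 0 < d /\ exists M : R,
        forall (a b : R) (ha : 0 < a) (hab : a <= b), a < d -> M <= b ->
          Rabs (RiemannInt (I a b ha hab) - l) < eps.

Definition Int_R (f : R -> R) : R :=
  epsilon (inhabits 0) (improper_integral_R f).
Definition Int_0_inf (f : R -> R) : R :=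
  epsilon (inhabits 0) (improper_integral_0_inf f).

Definition conv (f h : R -> R) (xi : R) : R :=
  / (2 * PI) * Int_R (fun eta => f eta * h (xi - eta)).

(* m-fold normalized convolution: g_1 = g, g_{m+1} = g_m * g.
   (g_0 is not used; it is set to g.) *)
Fixpoint conv_pow (g : R -> R) (m : nat) : R -> R :=
  match m with
  | O => g
  | S O => g
  | S k => conv (conv_pow g k) g
  end.

Definition Gamma (x : R) : R :=
  Int_0_inf (fun t => Rpower t (x - 1) * exp (- t)).

Definition BesselK (nu x : R) : R :=
  Int_0_inf (fun t => exp (- x * cosh t) * cosh (nu * t)).

(* Write phi_n(x) = theta_n(x) e^(-x) with theta_n the reverse Bessel polynomials.
   Convolving phi_n(a|t|) with e^(-a|t|) amounts to solving v'' = a^2 v - 2 a phi_n(a|t|)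
   with v decaying at both ends, and v = phi_(n+1)(a|t|) / (a (n+1)) is that solution; hence
   g_m = C (C / (2 pi a))^(m-1) / (m-1)! * phi_(m-1)(a|xi|).  On the other hand
   x^(n+1/2) K_(n+1/2)(x) = sqrt(pi/2) phi_n(x): for n = 0 the substitution
   s = sqrt(2x) sinh(t/2) reduces K_(1/2) to the Gaussian integral, and
   K_(nu+1) = K_(nu-1) + (2 nu / x) K_nu matches the three-term recurrence of phi_n.
   With Gamma(m) = (m-1)! this is the identity.  For the bound, the recurrence also gives
   theta_n(x) <= prod_(k<n) (1 + x + 2k) = 2^n Gamma((1+x)/2 + n) / Gamma((1+x)/2). *)

From Stdlib Require Import Reals Lra Lia Classical ClassicalEpsilon FunctionalExtensionality.
From Coquelicot Require Import Coquelicot.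
Open Scope R_scope.

Lemma Int_R_eq f l : improper_integral_R f l -> Int_R f = l.
Proof.
  intros Hl. unfold Int_R.
  assert (H := epsilon_spec (inhabits 0) (improper_integral_R f) (ex_intro _ l Hl)).
  set (l' := epsilon _ _) in *. clearbody l'.
  destruct (Req_dec l' l) as [|Hne]; auto. exfalso.
  destruct H as [I1 H1], Hl as [I2 H2].
  assert (He : 0 < Rabs (l' - l) / 2) by (generalize (Rabs_pos_lt _ (Rminus_eq_contra _ _ Hne)); lra).
  destruct (H1 _ He) as [M1 HM1], (H2 _ He) as [M2 HM2].
  assert (HM := Rmax_l (Rabs M1) (Rabs M2)). assert (HM' := Rmax_r (Rabs M1) (Rabs M2)).
  set (M := Rmax (Rabs M1) (Rabs M2)) in *.
  assert (Hb1 := Rle_abs M1). assert (Hb2 := Rle_abs M2).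
  specialize (HM1 (- M) M ltac:(lra) ltac:(lra)). specialize (HM2 (- M) M ltac:(lra) ltac:(lra)).
  rewrite (RiemannInt_P5 (I1 (- M) M) (I2 (- M) M)) in HM1.
  revert HM1 HM2. set (r := RiemannInt _). unfold Rabs; repeat destruct Rcase_abs; lra.
Qed.

Lemma Int_0_inf_eq f l : improper_integral_0_inf f l -> Int_0_inf f = l.
Proof.
  intros Hl. unfold Int_0_inf.
  assert (H := epsilon_spec (inhabits 0) (improper_integral_0_inf f) (ex_intro _ l Hl)).
  set (l' := epsilon _ _) in *. clearbody l'.
  destruct (Req_dec l' l) as [|Hne]; auto. exfalso.
  destruct H as [I1 H1], Hl as [I2 H2].
  assert (He : 0 < Rabs (l' - l) / 2) by (generalize (Rabs_pos_lt _ (Rminus_eq_contra _ _ Hne)); lra).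
  destruct (H1 _ He) as [d1 [Hd1 [M1 HM1]]], (H2 _ He) as [d2 [Hd2 [M2 HM2]]].
  set (a := Rmin d1 d2 / 2).
  assert (ha : 0 < a) by (unfold a, Rmin; destruct Rle_dec; lra).
  assert (Ha1 := Rmin_l d1 d2). assert (Ha2 := Rmin_r d1 d2).
  assert (hab := Rmax_l a (Rmax M1 M2)). assert (Hb := Rmax_r a (Rmax M1 M2)).
  assert (Hb1 := Rmax_l M1 M2). assert (Hb2 := Rmax_r M1 M2).
  set (b := Rmax a (Rmax M1 M2)) in *.
  specialize (HM1 a b ha hab ltac:(unfold a; lra) ltac:(lra)).
  specialize (HM2 a b ha hab ltac:(unfold a; lra) ltac:(lra)).
  rewrite (RiemannInt_P5 (I1 a b ha hab) (I2 a b ha hab)) in HM1.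
  revert HM1 HM2. set (r := RiemannInt _). unfold Rabs; repeat destruct Rcase_abs; lra.
Qed.

Definition lim_0_right (F : R -> R) (l : R) : Prop :=
  forall eps, 0 < eps -> exists d, 0 < d /\ forall a, 0 < a < d -> Rabs (F a - l) < eps.

Definition lim_p_infty (F : R -> R) (l : R) : Prop :=
  forall eps, 0 < eps -> exists M, forall b, M <= b -> Rabs (F b - l) < eps.

Definition lim_0_inf (P : R -> R -> R) (l : R) : Prop :=
  forall eps, 0 < eps -> exists d, 0 < d /\ exists M,
    forall a b, 0 < a -> a <= b -> a < d -> M <= b -> Rabs (P a b - l) < eps.

Lemma improper_integral_R_RInt f l :
  (forall a b, a <= b -> ex_RInt f a b) ->
  (forall eps, 0 < eps -> exists M, forall a b, a <= - M -> M <= b -> Rabs (RInt f a b - l) < eps) ->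
  improper_integral_R f l.
Proof.
  intros Hex Hlim.
  assert (Hex' : forall a b, ex_RInt f a b).
  { intros a b. destruct (Rle_dec a b); [auto|]. apply ex_RInt_swap, Hex. lra. }
  exists (fun a b => ex_RInt_Reals_0 f a b (Hex' a b)).
  intros eps He. destruct (Hlim eps He) as [M HM]. exists M. intros a b h1 h2.
  rewrite <- RInt_Reals. auto.
Qed.

Lemma improper_integral_0_inf_RInt f l :
  improper_integral_0_inf f l <->
  (forall a b, 0 < a -> a <= b -> ex_RInt f a b) /\ lim_0_inf (RInt f) l.
Proof.
  split.
  - intros [I H]. split.
    + intros a b ha hab. apply ex_RInt_Reals_1, I; auto.
    + intros eps He. destruct (H eps He) as [d [Hd [M HM]]]. exists d. split; auto. exists M.
      intros a b ha hab h1 h2. rewrite (RInt_Reals _ _ _ (I a b ha hab)). auto.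
  - intros [Hex Hlim].
    exists (fun a b ha hab => ex_RInt_Reals_0 f a b (Hex a b ha hab)).
    intros eps He. destruct (Hlim eps He) as [d [Hd [M HM]]]. exists d. split; auto. exists M.
    intros a b ha hab h1 h2. rewrite <- RInt_Reals. auto.
Qed.

Lemma lim_0_inf_ext P Q l :
  (forall a b, 0 < a -> a <= b -> P a b = Q a b) -> lim_0_inf Q l -> lim_0_inf P l.
Proof.
  intros HE HQ eps He. destruct (HQ eps He) as [d [Hd [M HM]]]. exists d; split; auto. exists M.
  intros. rewrite HE; auto.
Qed.

Lemma lim_0_inf_increment F A B :
  lim_0_right F A -> lim_p_infty F B -> lim_0_inf (fun a b => F b - F a) (B - A).
Proof.
  intros HA HB eps He.
  destruct (HA (eps / 2)) as [d [Hd Hd']]; [lra|].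
  destruct (HB (eps / 2)) as [M HM]; [lra|].
  exists d; split; auto. exists M. intros a b ha hab had hbm.
  specialize (Hd' a (conj ha had)). specialize (HM b hbm).
  revert Hd' HM. unfold Rabs; repeat destruct Rcase_abs; lra.
Qed.

Lemma lim_0_inf_lin P1 P2 P3 l1 l2 l3 (c : R) :
  lim_0_inf P1 l1 -> lim_0_inf P2 l2 -> lim_0_inf P3 l3 ->
  lim_0_inf (fun a b => P1 a b + c * P2 a b + P3 a b) (l1 + c * l2 + l3).
Proof.
  intros H1 H2 H3 eps He.
  assert (Hc : 0 < Rabs c + 1) by (generalize (Rabs_pos c); lra).
  set (e := eps / (3 * (Rabs c + 1))).
  assert (He' : 0 < e) by (unfold e; apply Rdiv_lt_0_compat; lra).
  destruct (H1 e He') as [d1 [Hd1 [M1 HM1]]], (H2 e He') as [d2 [Hd2 [M2 HM2]]],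
    (H3 e He') as [d3 [Hd3 [M3 HM3]]].
  exists (Rmin d1 (Rmin d2 d3)). split.
  { repeat apply Rmin_glb_lt; auto. }
  exists (Rmax M1 (Rmax M2 M3)). intros a b ha hab had hbm.
  assert (Hd := Rmin_l d1 (Rmin d2 d3)). assert (Hd' := Rmin_r d1 (Rmin d2 d3)).
  assert (Hd2' := Rmin_l d2 d3). assert (Hd3' := Rmin_r d2 d3).
  assert (HM := Rmax_l M1 (Rmax M2 M3)). assert (HM' := Rmax_r M1 (Rmax M2 M3)).
  assert (HM2' := Rmax_l M2 M3). assert (HM3' := Rmax_r M2 M3).
  specialize (HM1 a b ha hab ltac:(lra) ltac:(lra)).
  specialize (HM2 a b ha hab ltac:(lra) ltac:(lra)).
  specialize (HM3 a b ha hab ltac:(lra) ltac:(lra)).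
  replace (P1 a b + c * P2 a b + P3 a b - (l1 + c * l2 + l3))
    with ((P1 a b - l1) + c * (P2 a b - l2) + (P3 a b - l3)) by ring.
  assert (Hc2 : Rabs (c * (P2 a b - l2)) <= (Rabs c + 1) * e).
  { rewrite Rabs_mult. apply Rmult_le_compat; try apply Rabs_pos; lra. }
  assert (e * (3 * (Rabs c + 1)) = eps) by (unfold e; field; lra).
  assert (e <= (Rabs c + 1) * e) by (generalize (Rabs_pos c); nra).
  eapply Rle_lt_trans; [apply Rabs_triang|].
  eapply Rle_lt_trans; [apply Rplus_le_compat_r, Rabs_triang|]. nra.
Qed.

Lemma lim_0_right_continuous F : continuous F 0 -> lim_0_right F (F 0).
Proof.
  intros Hc. apply continuity_pt_filterlim in Hc. intros eps He.
  destruct (Hc eps He) as [d [Hd Hd']]. exists d. split; auto.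
  intros a Ha. apply Hd'. split; [split; [constructor|lra]|].
  simpl. unfold R_dist. rewrite Rminus_0_r, Rabs_pos_eq; lra.
Qed.

Lemma RInt_antiderivative_on (F f : R -> R) A B :
  (forall x, Rmin A B <= x <= Rmax A B -> is_derive F x (f x)) ->
  (forall x, Rmin A B <= x <= Rmax A B -> continuous f x) ->
  @eq R (RInt f A B) (F B - F A).
Proof. intros H1 H2. apply is_RInt_unique, (is_RInt_derive F f A B H1 H2). Qed.

Lemma RInt_antiderivative (F f : R -> R) A B :
  (forall t, is_derive F t (f t)) -> (forall t, continuous f t) -> @eq R (RInt f A B) (F B - F A).
Proof. intros; apply RInt_antiderivative_on; auto. Qed.

Lemma exp_increasing_le x y : x <= y -> exp x <= exp y.
Proof. intros [H | ->]; [left; apply exp_increasing; auto|lra]. Qed.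

Lemma exp_mul_small_eventually a B eps : 0 < a -> 0 <= B -> 0 < eps ->
  exists M, forall u, u <= - M -> exp (a * u) * B < eps.
Proof.
  intros Ha HB He.
  set (L := ln (eps / (B + 1))).
  exists (Rabs L / a). intros u Hu.
  assert (HaL : a * u <= L).
  { apply Rmult_le_compat_l with (r := a) in Hu; [|lra].
    replace (a * - (Rabs L / a)) with (- Rabs L) in Hu by (field; lra).
    generalize (Rle_abs (- L)). rewrite Rabs_Ropp. lra. }
  assert (Hexp : exp (a * u) <= eps / (B + 1)).
  { unfold L in HaL. rewrite <- (exp_ln (eps / (B + 1))) by (apply Rdiv_lt_0_compat; lra).
    apply exp_increasing_le; auto. }
  apply Rle_lt_trans with (eps / (B + 1) * B).
  - apply Rmult_le_compat_r; lra.
  - apply Rmult_lt_reg_r with (B + 1); [lra|].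
    replace (eps / (B + 1) * B * (B + 1)) with (eps * B) by (field; lra). nra.
Qed.

Lemma is_derive_ext_R (f g : R -> R) (x l : R) :
  (forall t, f t = g t) -> is_derive f x l -> is_derive g x l.
Proof. apply is_derive_ext. Qed.

Lemma is_derive_val_R (f : R -> R) (x l l' : R) : is_derive f x l -> l = l' -> is_derive f x l'.
Proof. intros H <-; auto. Qed.

Lemma RInt_ext_R (f g : R -> R) (a b : R) :
  (forall x, Rmin a b < x < Rmax a b -> f x = g x) -> @eq R (RInt f a b) (RInt g a b).
Proof. apply RInt_ext. Qed.

Lemma nat_ind2 (P : nat -> Prop) :
  P 0%nat -> P 1%nat -> (forall n, P n -> P (S n) -> P (S (S n))) -> forall n, P n.
Proof.
  intros H0 H1 HS n. enough (P n /\ P (S n)) by tauto.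
  induction n as [|n [IHn IHSn]]; auto.
Qed.

Fixpoint phi (n : nat) (x : R) : R :=
  match n with
  | O => exp (- x)
  | S k => match k with
           | O => (1 + x) * exp (- x)
           | S j => x ^ 2 * phi j x + (2 * INR j + 3) * phi k x
           end
  end.

Lemma phi_SS n x : phi (S (S n)) x = x ^ 2 * phi n x + (2 * INR n + 3) * phi (S n) x.
Proof. reflexivity. Qed.

Definition dphi (n : nat) (x : R) : R :=
  match n with O => - phi 0 x | S k => - x * phi k x end.

Lemma is_derive_phi n (x : R) : is_derive (phi n) x (dphi n x).
Proof.
  revert x. induction n as [| | n IH1 IH2] using nat_ind2; intros x.
  - simpl. auto_derive; auto. ring.
  - simpl. auto_derive; auto. ring.
  - apply (is_derive_ext (fun y => y ^ 2 * phi n y + (2 * INR n + 3) * phi (S n) y)); [reflexivity|].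
    evar (d : R). replace (dphi (S (S n)) x) with d; [apply @is_derive_plus|].
    + apply (is_derive_mult (fun y => y ^ 2) (phi n)); [auto_derive; auto|apply IH1|apply Rmult_comm].
    + apply is_derive_scal, IH2.
    + unfold d, plus, mult; simpl. destruct n as [|n]; [simpl; ring|]. simpl dphi. rewrite S_INR. ring.
Qed.

Lemma continuous_phi n x : continuous (phi n) x.
Proof. exact (ex_derive_continuous (phi n) x (ex_intro _ _ (is_derive_phi n x))). Qed.

Lemma phi_ge0 n x : 0 <= x -> 0 <= phi n x.
Proof.
  intros Hx. induction n as [| | n IH1 IH2] using nat_ind2.
  - apply Rlt_le, exp_pos.
  - apply Rmult_le_pos; [lra|apply Rlt_le, exp_pos].
  - rewrite phi_SS. generalize (pos_INR n) (pow2_ge_0 x). nra.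
Qed.

Lemma phi_decreasing n x y : 0 <= x -> x <= y -> phi n y <= phi n x.
Proof.
  intros Hx Hxy.
  destruct (MVT_gen (phi n) x y (dphi n)) as [c [Hc Heq]].
  - intros; apply is_derive_phi.
  - intros; apply continuity_pt_filterlim, continuous_phi.
  - rewrite Rmin_left in Hc by lra.
    assert (dphi n c <= 0).
    { destruct n; simpl dphi.
      - generalize (exp_pos (- c)); simpl; lra.
      - generalize (phi_ge0 n c ltac:(lra)). nra. }
    nra.
Qed.

Lemma phi_le_phi0 n x : 0 <= x -> 0 <= phi n x <= phi n 0.
Proof. split; [apply phi_ge0|apply phi_decreasing]; lra. Qed.

Lemma mul_phi_le n x : 0 <= x -> x * phi n x <= (phi n 0 + phi (S (S n)) 0) / 2.
Proof.
  intros Hx.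
  assert (H2 : x ^ 2 * phi n x <= phi (S (S n)) x).
  { rewrite phi_SS. generalize (phi_ge0 (S n) x Hx) (pos_INR n). nra. }
  destruct (phi_le_phi0 (S (S n)) x Hx), (phi_le_phi0 n x Hx).
  assert (0 <= (x - 1) ^ 2) by apply pow2_ge_0. nra.
Qed.

Fixpoint pochhammer (s : R) (n : nat) : R :=
  match n with O => 1 | S k => pochhammer s k * (s + INR k) end.

Lemma pochhammer_ge0 s n : 0 <= s -> 0 <= pochhammer s n.
Proof.
  intros Hs. induction n; simpl; [lra|]. generalize (pos_INR n). intros. apply Rmult_le_pos; lra.
Qed.

Lemma phi_le_exp_pochhammer n x :
  0 <= x -> phi n x <= exp (- x) * (2 ^ n * pochhammer ((1 + x) / 2) n).
Proof.
  intros Hx.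
  assert (Hstep : forall k, 2 ^ S k * pochhammer ((1 + x) / 2) (S k)
                            = 2 ^ k * pochhammer ((1 + x) / 2) k * (1 + x + 2 * INR k)).
  { intros k. simpl. field. }
  induction n as [| | n IH1 IH2] using nat_ind2.
  - simpl. lra.
  - simpl. lra.
  - rewrite phi_SS, Hstep, Hstep. rewrite Hstep in IH2.
    assert (HQ := pochhammer_ge0 ((1 + x) / 2) n ltac:(lra)).
    generalize (exp_pos (- x)) (pos_INR n) (pow_le 2 n ltac:(lra)) (pow2_ge_0 x). rewrite S_INR.
    set (Q := 2 ^ n * pochhammer ((1 + x) / 2) n) in *.
    intros. assert (0 <= Q) by (unfold Q; apply Rmult_le_pos; auto).
    assert (x ^ 2 * phi n x <= x ^ 2 * (exp (- x) * Q)) by (apply Rmult_le_compat_l; auto).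
    assert (0 <= exp (- x) * Q * x * (1 + 2 * INR n)).
    { repeat apply Rmult_le_pos; lra. }
    nra.
Qed.

Lemma is_derive_comp_scal_abs (h dh : R -> R) (a t : R) : t <> 0 ->
  (forall y, is_derive h y (dh y)) ->
  is_derive (fun s => h (a * Rabs s)) t (a * (t / Rabs t) * dh (a * Rabs t)).
Proof.
  intros Ht Hd. destruct (Rlt_dec 0 t) as [Hp|Hn].
  - apply (is_derive_ext_loc (fun s => h (a * s))).
    + eapply filter_imp; [|apply (open_gt 0 t Hp)]. intros s Hs. simpl in Hs.
      rewrite (Rabs_pos_eq s); [reflexivity|lra].
    + rewrite Rabs_pos_eq, Rdiv_diag, Rmult_1_r by lra.
      apply (is_derive_comp h (fun s => a * s)); [apply Hd|auto_derive; auto; ring].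
  - apply (is_derive_ext_loc (fun s => h (a * - s))).
    + eapply filter_imp; [|apply (open_lt 0 t ltac:(lra))]. intros s Hs. simpl in Hs.
      rewrite (Rabs_left s); [reflexivity|lra].
    + rewrite Rabs_left by lra. replace (a * (t / - t)) with (- a) by (field; lra).
      apply (is_derive_comp h (fun s => a * - s)); [apply Hd|auto_derive; auto; ring].
Qed.

Lemma is_derive_comp_scal_abs_0 (h dh : R -> R) a :
  (forall y, is_derive h y (dh y)) -> dh 0 = 0 -> continuous dh 0 ->
  is_derive (fun t => h (a * Rabs t)) 0 0.
Proof.
  intros Hd H0 Hc. apply is_derive_Reals. apply continuity_pt_filterlim in Hc.
  intros eps He.
  assert (Ha1 : 0 < Rabs a + 1) by (generalize (Rabs_pos a); lra).
  destruct (Hc (eps / (Rabs a + 1))) as [alp [Halp Hc']]; [apply Rdiv_lt_0_compat; lra|].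
  assert (Hdel : 0 < alp / (Rabs a + 1)) by (apply Rdiv_lt_0_compat; lra).
  exists (mkposreal _ Hdel). intros d Hd0 Hdl. simpl in Hdl.
  rewrite Rplus_0_l, Rabs_R0, Rmult_0_r.
  destruct (MVT_gen h 0 (a * Rabs d) dh) as [c [Hc1 Hc2]].
  { intros; apply Hd. }
  { intros x _; apply continuity_pt_filterlim, (ex_derive_continuous h x (ex_intro _ _ (Hd x))). }
  rewrite Rminus_0_r in Hc2. rewrite Hc2.
  (* mean value theorem: the quotient is dh c * a * sign d with |c| <= |a d| *)
  assert (Hcb : Rabs c <= Rabs a * Rabs d).
  { rewrite <- (Rabs_Rabsolu d), <- Rabs_mult. revert Hc1. unfold Rmin, Rmax.
    destruct (Rle_dec 0 (a * Rabs d)); intros; unfold Rabs at 1 2; repeat destruct Rcase_abs; lra. }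
  assert (Hca : Rabs c < alp).
  { apply Rmult_lt_compat_l with (r := Rabs a + 1) in Hdl; [|lra].
    replace ((Rabs a + 1) * (alp / (Rabs a + 1))) with alp in Hdl by (field; lra).
    generalize (Rabs_pos a) (Rabs_pos d). nra. }
  assert (Hdc : Rabs (dh c) < eps / (Rabs a + 1)).
  { destruct (Req_dec c 0) as [->|Hc0]; [rewrite H0, Rabs_R0; apply Rdiv_lt_0_compat; lra|].
    specialize (Hc' c). simpl in Hc'. unfold R_dist in Hc'. rewrite H0, !Rminus_0_r in Hc'. apply Hc'.
    split; [split; [constructor|auto]|]. auto. }
  replace (dh c * (a * Rabs d) / d - 0) with (dh c * a * (Rabs d / d)) by (field; auto).
  assert (Rabs (Rabs d / d) = 1).
  { unfold Rdiv. rewrite Rabs_mult, Rabs_Rabsolu, Rabs_inv. field. apply Rabs_no_R0; auto. }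
  rewrite Rabs_mult, H, Rmult_1_r, Rabs_mult.
  apply Rle_lt_trans with (eps / (Rabs a + 1) * Rabs a).
  - apply Rmult_le_compat_r; [apply Rabs_pos|lra].
  - apply Rmult_lt_reg_r with (Rabs a + 1); [lra|].
    replace (eps / (Rabs a + 1) * Rabs a * (Rabs a + 1)) with (eps * Rabs a) by (field; lra). nra.
Qed.

Lemma is_derive_id_mul_0 (w : R -> R) : continuous w 0 -> is_derive (fun t => t * w t) 0 (w 0).
Proof.
  intros Hc. apply is_derive_Reals. apply continuity_pt_filterlim in Hc.
  intros eps He. destruct (Hc _ He) as [alp [Halp Hc']].
  exists (mkposreal alp Halp). intros d Hd0 Hdl. simpl in Hdl.
  replace (((0 + d) * w (0 + d) - 0 * w 0) / d - w 0) with (w d - w 0)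
    by (rewrite Rplus_0_l; field; auto).
  apply Hc'. split; [split; [constructor|auto]|]. simpl. unfold R_dist. rewrite Rminus_0_r. auto.
Qed.

Lemma continuous_phi_abs n a x : continuous (fun t => phi n (a * Rabs t)) x.
Proof.
  apply (continuous_comp (fun t => a * Rabs t) (phi n)); [|apply continuous_phi].
  apply (continuous_scal_r a Rabs), continuous_Rabs.
Qed.

Lemma is_derive_phi_abs k (a t : R) :
  is_derive (fun s => phi (S k) (a * Rabs s)) t (- a ^ 2 * t * phi k (a * Rabs t)).
Proof.
  destruct (Req_dec t 0) as [->|Ht].
  - replace (- a ^ 2 * 0 * phi k (a * Rabs 0)) with 0 by ring.
    apply (is_derive_comp_scal_abs_0 (phi (S k)) (dphi (S k))); [apply is_derive_phi|simpl; ring|].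
    apply (continuous_mult (fun y => - y) (phi k)); [|apply continuous_phi].
    apply (ex_derive_continuous (fun y : R => - y)); auto_derive; auto.
  - eapply is_derive_val_R; [apply is_derive_comp_scal_abs; [auto|apply is_derive_phi]|].
    simpl dphi. field. apply Rabs_no_R0; auto.
Qed.

Lemma is_derive_id_mul_phi_abs n (a t : R) :
  is_derive (fun s => s * phi n (a * Rabs s)) t
    (phi n (a * Rabs t) + a * Rabs t * dphi n (a * Rabs t)).
Proof.
  destruct (Req_dec t 0) as [->|Ht].
  - rewrite Rabs_R0, Rmult_0_r, Rmult_0_l, Rplus_0_r.
    replace (phi n 0) with (phi n (a * Rabs 0)) by (rewrite Rabs_R0, Rmult_0_r; auto).
    apply (is_derive_id_mul_0 (fun s => phi n (a * Rabs s))), continuous_phi_abs.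
  - eapply is_derive_val_R.
    + apply (is_derive_mult (fun s => s) (fun s => phi n (a * Rabs s))); [|apply is_derive_comp_scal_abs; auto|].
      * auto_derive; auto.
      * apply is_derive_phi.
      * intros; apply Rmult_comm.
    + unfold plus, mult; simpl. unfold Rabs; destruct Rcase_abs; field; lra.
Qed.

Lemma phi_S_dphi n y : phi (S n) y = (2 * INR n + 1) * phi n y - y * dphi n y.
Proof. destruct n; [simpl; ring|]. simpl dphi. rewrite phi_SS, S_INR. ring. Qed.

(* v solves v'' = a^2 v - 2 a K phi_n(a|t|) and decays at both ends, so it is the
   convolution; F1 and F2 are the variation-of-constants antiderivatives of the
   integrand to the left and to the right of xi. *)
Section ConvolutionStep.
Variables (n : nat) (a K xi : R).
Hypothesis Ha : 0 < a.

Let N1 := INR n + 1.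
Let v t := K * phi (S n) (a * Rabs t) / (a * N1).
Let v1 t := - K * a * t * phi n (a * Rabs t) / N1.
Let v2 t := - K * a * (phi n (a * Rabs t) + a * Rabs t * dphi n (a * Rabs t)) / N1.
Let f t := K * phi n (a * Rabs t) * exp (- a * Rabs (xi - t)).
Let F1 t := exp (a * (t - xi)) * (v t / 2 - v1 t / (2 * a)).
Let F2 t := - exp (a * (xi - t)) * (v t / 2 + v1 t / (2 * a)).

Lemma N1_pos : 0 < N1.
Proof. unfold N1. generalize (pos_INR n); lra. Qed.

Lemma is_derive_v (t : R) : is_derive v t (v1 t).
Proof.
  unfold v, v1.
  apply (is_derive_ext_R (fun s => K / (a * N1) * phi (S n) (a * Rabs s))); [intros; unfold Rdiv; ring|].
  eapply is_derive_val_R; [apply is_derive_scal, is_derive_phi_abs|].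
  generalize N1_pos. intros. field. lra.
Qed.

Lemma is_derive_v1 (t : R) : is_derive v1 t (v2 t).
Proof.
  unfold v1, v2.
  apply (is_derive_ext_R (fun s => - K * a / N1 * (s * phi n (a * Rabs s)))); [intros; unfold Rdiv; ring|].
  eapply is_derive_val_R; [apply is_derive_scal, is_derive_id_mul_phi_abs|].
  unfold Rdiv. ring.
Qed.

Lemma v_ode t : v2 t = a ^ 2 * v t - 2 * a * (K * phi n (a * Rabs t)).
Proof.
  unfold v2, v. rewrite phi_S_dphi. fold N1. generalize N1_pos. intros. unfold N1 in *. field. lra.
Qed.

Lemma is_derive_half_sum (sg t : R) :
  is_derive (fun s => v s / 2 + sg * (v1 s / (2 * a))) t (v1 t / 2 + sg * (v2 t / (2 * a))).
Proof.
  apply (is_derive_ext_R (fun s => / 2 * v s + (sg / (2 * a)) * v1 s)); [intros; field; lra|].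
  eapply is_derive_val_R.
  - apply (is_derive_plus (fun s => / 2 * v s)); apply is_derive_scal; [apply is_derive_v|apply is_derive_v1].
  - unfold plus; simpl. field. lra.
Qed.

Lemma is_derive_F1 (t : R) : is_derive F1 t (K * phi n (a * Rabs t) * exp (a * (t - xi))).
Proof.
  apply (is_derive_ext_R (fun s => exp (a * (s - xi)) * (v s / 2 + (-1) * (v1 s / (2 * a)))));
    [intros; unfold F1; ring|].
  eapply is_derive_val_R.
  - apply (is_derive_mult (fun s => exp (a * (s - xi)))); [auto_derive; auto|apply is_derive_half_sum|].
    intros; apply Rmult_comm.
  - unfold plus, mult; simpl. rewrite v_ode. unfold Rminus. field. lra.
Qed.

Lemma is_derive_F2 (t : R) : is_derive F2 t (K * phi n (a * Rabs t) * exp (a * (xi - t))).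
Proof.
  apply (is_derive_ext_R (fun s => - exp (a * (xi - s)) * (v s / 2 + 1 * (v1 s / (2 * a)))));
    [intros; unfold F2; ring|].
  eapply is_derive_val_R.
  - apply (is_derive_mult (fun s => - exp (a * (xi - s)))); [auto_derive; auto|apply is_derive_half_sum|].
    intros; apply Rmult_comm.
  - unfold plus, mult; simpl. rewrite v_ode. unfold Rminus. field. lra.
Qed.

Lemma continuous_phi_abs_exp (p q t : R) :
  continuous (fun s => K * phi n (a * Rabs s) * exp (p * s + q)) t.
Proof.
  apply (continuous_mult (fun s => K * phi n (a * Rabs s))).
  - apply (continuous_scal_r K (fun s => phi n (a * Rabs s))), continuous_phi_abs.
  - apply (ex_derive_continuous (fun s => exp (p * s + q))). auto_derive. auto.
Qed.

Lemma continuous_f t : continuous f t.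
Proof.
  apply (continuous_mult (fun s => K * phi n (a * Rabs s))).
  - apply (continuous_scal_r K (fun s => phi n (a * Rabs s))), continuous_phi_abs.
  - apply (continuous_comp (fun s => - a * Rabs (xi - s)) exp).
    + apply (continuous_scal_r (- a) (fun s => Rabs (xi - s))), (continuous_comp (fun s => xi - s) Rabs); [|apply continuous_Rabs].
      apply (ex_derive_continuous (fun s => xi - s)). auto_derive. auto.
    + apply (ex_derive_continuous exp). auto_derive. auto.
Qed.

Lemma ex_RInt_f A B : ex_RInt f A B.
Proof. apply (@ex_RInt_continuous R_CompleteNormedModule). intros; apply continuous_f. Qed.

Lemma RInt_f A B : A <= xi -> xi <= B -> @eq R (RInt f A B) (v xi - F1 A + F2 B).
Proof.
  intros HA HB.
  rewrite <- (RInt_Chasles f A xi B (ex_RInt_f _ _) (ex_RInt_f _ _)).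
  change (plus (RInt f A xi) (RInt f xi B)) with (RInt f A xi + RInt f xi B).
  rewrite (RInt_ext f (fun s => K * phi n (a * Rabs s) * exp (a * s + - a * xi))).
  2: { intros x Hx. rewrite Rmin_left, Rmax_right in Hx by lra. unfold f.
       rewrite (Rabs_pos_eq (xi - x)) by lra. do 2 f_equal. ring. }
  rewrite (RInt_ext f (fun s => K * phi n (a * Rabs s) * exp (- a * s + a * xi)) xi B).
  2: { intros x Hx. rewrite Rmin_left, Rmax_right in Hx by lra. unfold f.
       rewrite (Rabs_left1 (xi - x)) by lra. do 2 f_equal. ring. }
  rewrite (RInt_antiderivative F1), (RInt_antiderivative F2).
  - unfold F1, F2. rewrite !Rminus_diag, Rmult_0_r, exp_0. field. lra.
  - intros t. eapply is_derive_val_R; [apply is_derive_F2|]. do 2 f_equal. ring.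
  - intros; apply continuous_phi_abs_exp.
  - intros t. eapply is_derive_val_R; [apply is_derive_F1|]. do 2 f_equal. ring.
  - intros; apply continuous_phi_abs_exp.
Qed.

Let v_max := Rabs K * phi (S n) 0 / (a * N1).
Let v1_max := Rabs K * (phi n 0 + phi (S (S n)) 0) / (2 * N1).

Lemma v_le t : Rabs (v t) <= v_max.
Proof.
  assert (Hx : 0 <= a * Rabs t) by (apply Rmult_le_pos; [lra|apply Rabs_pos]).
  assert (HN := N1_pos). destruct (phi_le_phi0 (S n) _ Hx).
  unfold v, v_max, Rdiv. rewrite !Rabs_mult, (Rabs_pos_eq (phi _ _)), Rabs_inv, (Rabs_pos_eq (a * N1)) by nra.
  apply Rmult_le_compat_r; [apply Rlt_le, Rinv_0_lt_compat; nra|].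
  apply Rmult_le_compat_l; [apply Rabs_pos|lra].
Qed.

Lemma v1_le t : Rabs (v1 t) <= v1_max.
Proof.
  assert (Hx : 0 <= a * Rabs t) by (apply Rmult_le_pos; [lra|apply Rabs_pos]).
  assert (HN := N1_pos). assert (Hp := phi_ge0 n _ Hx). assert (Hm := mul_phi_le n _ Hx).
  replace (v1 t) with (- K * (a * t * phi n (a * Rabs t)) / N1) by (unfold v1; field; lra).
  unfold v1_max, Rdiv. rewrite !Rabs_mult, Rabs_Ropp, Rabs_inv, (Rabs_pos_eq N1) by lra.
  rewrite (Rabs_pos_eq (phi _ _)), (Rabs_pos_eq a) by lra.
  replace (Rabs K * (phi n 0 + phi (S (S n)) 0) * / (2 * N1))
    with (Rabs K * ((phi n 0 + phi (S (S n)) 0) / 2) * / N1) by (field; lra).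
  apply Rmult_le_compat_r; [apply Rlt_le, Rinv_0_lt_compat; lra|].
  apply Rmult_le_compat_l; [apply Rabs_pos|]. rewrite Rmult_assoc. lra.
Qed.

Lemma half_sum_le t (sg : R) : Rabs sg = 1 ->
  Rabs (v t / 2 + sg * (v1 t / (2 * a))) <= v_max / 2 + v1_max / (2 * a).
Proof.
  intros Hsg. eapply Rle_trans; [apply Rabs_triang|].
  rewrite Rabs_mult, Hsg, Rmult_1_l. unfold Rdiv. rewrite !Rabs_mult, !Rabs_inv.
  rewrite (Rabs_pos_eq 2), (Rabs_pos_eq (2 * a)) by lra.
  generalize (v_le t) (v1_le t). intros.
  apply Rplus_le_compat; apply Rmult_le_compat_r; try lra;
    apply Rlt_le, Rinv_0_lt_compat; lra.
Qed.

Lemma improper_integral_phi_exp : improper_integral_R f (v xi).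
Proof.
  apply improper_integral_R_RInt; [intros; apply ex_RInt_f|].
  intros eps He.
  assert (HB : 0 <= v_max / 2 + v1_max / (2 * a)).
  { generalize (v_le 0) (v1_le 0) (Rabs_pos (v 0)) (Rabs_pos (v1 0)). intros.
    apply Rplus_le_le_0_compat; apply Rdiv_le_0_compat; lra. }
  destruct (exp_mul_small_eventually a _ (eps / 2) Ha HB ltac:(lra)) as [M HM].
  exists (Rabs M + Rabs xi). intros A B HA HB'.
  generalize (Rabs_pos M) (Rle_abs M) (Rle_abs xi) (Rle_abs (- xi)). rewrite Rabs_Ropp. intros.
  rewrite RInt_f by lra.
  replace (v xi - F1 A + F2 B - v xi) with (F2 B - F1 A) by ring.
  assert (HF1 : Rabs (F1 A) < eps / 2).
  { unfold F1. rewrite Rabs_mult, Rabs_pos_eq by (apply Rlt_le, exp_pos).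
    eapply Rle_lt_trans; [apply Rmult_le_compat_l; [apply Rlt_le, exp_pos|]|apply HM; lra].
    replace (v A / 2 - v1 A / (2 * a)) with (v A / 2 + (-1) * (v1 A / (2 * a))) by ring.
    apply half_sum_le. unfold Rabs; destruct Rcase_abs; lra. }
  assert (HF2 : Rabs (F2 B) < eps / 2).
  { unfold F2. rewrite Rabs_mult, Rabs_Ropp, Rabs_pos_eq by (apply Rlt_le, exp_pos).
    replace (a * (xi - B)) with (a * (- B + xi)) by ring.
    eapply Rle_lt_trans; [apply Rmult_le_compat_l; [apply Rlt_le, exp_pos|]|apply HM; lra].
    replace (v B / 2 + v1 B / (2 * a)) with (v B / 2 + 1 * (v1 B / (2 * a))) by ring.
    apply half_sum_le, Rabs_R1. }
  eapply Rle_lt_trans; [apply Rabs_triang|]. rewrite Rabs_Ropp. lra.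
Qed.

End ConvolutionStep.

Definition gauss (y : R) : R := exp (- (y ^ 2)).
Definition gauss_int (t : R) : R := RInt gauss 0 t.

Lemma continuous_gauss y : continuous gauss y.
Proof. apply (ex_derive_continuous gauss). unfold gauss. auto_derive. auto. Qed.

Lemma ex_RInt_gauss a b : ex_RInt gauss a b.
Proof. apply (@ex_RInt_continuous R_CompleteNormedModule). intros; apply continuous_gauss. Qed.

Lemma is_derive_gauss_int (t : R) : is_derive gauss_int t (gauss t).
Proof.
  apply (is_derive_RInt gauss gauss_int 0 t); [|apply continuous_gauss].
  apply filter_forall. intros b. apply (RInt_correct (V := R_CompleteNormedModule)), ex_RInt_gauss.
Qed.

Lemma gauss_int_ge0 t : 0 <= t -> 0 <= gauss_int t.
Proof. intros. apply RInt_ge_0; auto; [apply ex_RInt_gauss|intros; apply Rlt_le, exp_pos]. Qed.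

Definition gauss_aux (u s : R) : R := exp (- (u ^ 2 * (1 + s ^ 2))) / (1 + s ^ 2).
Definition gauss_aux_int (t : R) : R := RInt (gauss_aux t) 0 1.

Lemma one_add_sq_pos (s : R) : 0 < 1 + s ^ 2.
Proof. generalize (pow2_ge_0 s); lra. Qed.

Lemma ex_RInt_gauss_aux u a b : ex_RInt (gauss_aux u) a b.
Proof.
  apply (@ex_RInt_continuous R_CompleteNormedModule). intros s _.
  apply (ex_derive_continuous (gauss_aux u)). unfold gauss_aux. auto_derive.
  generalize (one_add_sq_pos s); lra.
Qed.

Lemma is_derive_gauss_aux (u s : R) :
  is_derive (fun z => gauss_aux z s) u (- 2 * u * exp (- (u ^ 2 * (1 + s ^ 2)))).
Proof.
  unfold gauss_aux. auto_derive; auto.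
  replace (- (u * (u * 1) * (1 + s * (s * 1)))) with (- (u ^ 2 * (1 + s ^ 2))) by ring.
  field. generalize (one_add_sq_pos s); lra.
Qed.

Lemma continuity_2d_pt_gauss_aux_deriv u s :
  continuity_2d_pt (fun u s => - 2 * u * exp (- (u ^ 2 * (1 + s ^ 2)))) u s.
Proof.
  apply (continuity_2d_pt_mult (fun u s => - 2 * u)).
  - apply (continuity_2d_pt_mult (fun _ _ => - 2)); [apply continuity_2d_pt_const|apply continuity_2d_pt_id1].
  - apply (continuity_1d_2d_pt_comp exp); [apply derivable_continuous_pt, derivable_pt_exp|].
    apply (continuity_2d_pt_opp (fun u s => u ^ 2 * (1 + s ^ 2))).
    apply (continuity_2d_pt_mult (fun u _ => u ^ 2) (fun _ s => 1 + s ^ 2)).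
    + apply (continuity_2d_pt_ext (fun u _ => u * u)); [intros; ring|].
      apply (continuity_2d_pt_mult (fun u _ => u) (fun u _ => u)); apply continuity_2d_pt_id1.
    + apply (continuity_2d_pt_plus (fun _ _ => 1) (fun _ s => s ^ 2)); [apply continuity_2d_pt_const|].
      apply (continuity_2d_pt_ext (fun _ s => s * s)); [intros; ring|].
      apply (continuity_2d_pt_mult (fun _ s => s) (fun _ s => s)); apply continuity_2d_pt_id2.
Qed.

Lemma is_derive_gauss_aux_int (t : R) : is_derive gauss_aux_int t (- 2 * gauss t * gauss_int t).
Proof.
  assert (Hd : RInt (fun s => Derive (fun u => gauss_aux u s) t) 0 1
               = RInt (fun s => - 2 * t * exp (- (t ^ 2 * (1 + s ^ 2)))) 0 1).
  { apply RInt_ext. intros s _. apply is_derive_unique, is_derive_gauss_aux. }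
  replace (- 2 * gauss t * gauss_int t) with (RInt (fun s => Derive (fun u => gauss_aux u s) t) 0 1).
  2: { rewrite Hd, (RInt_ext _ (fun s => scal (- 2 * exp (- t ^ 2)) (scal t (gauss (t * s + 0))))).
    2: { intros s _. unfold scal; simpl. unfold mult; simpl. unfold gauss.
         replace (- (t * (t * 1) * (1 + s * (s * 1)))) with (- (t * (t * 1)) + - ((t * s + 0) ^ 2)) by ring.
         rewrite exp_plus. ring. }
    rewrite (RInt_scal (V := R_CompleteNormedModule)).
    - rewrite (RInt_comp_lin (V := R_CompleteNormedModule)) by apply ex_RInt_gauss.
      rewrite Rmult_0_r, Rmult_1_r, !Rplus_0_r. reflexivity.
    - apply (@ex_RInt_continuous R_CompleteNormedModule). intros z _.
      apply (ex_derive_continuous (fun s => scal t (gauss (t * s + 0)))).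
      unfold gauss, scal; simpl; unfold mult; simpl. auto_derive. auto. }
  unfold gauss_aux_int.
  apply (is_derive_RInt_param gauss_aux 0 1 t).
  - apply filter_forall. intros x s _. eexists. apply is_derive_gauss_aux.
  - intros s _.
    apply (continuity_2d_pt_ext (fun u s => - 2 * u * exp (- (u ^ 2 * (1 + s ^ 2))))).
    + intros u v. symmetry. apply is_derive_unique, is_derive_gauss_aux.
    + apply continuity_2d_pt_gauss_aux_deriv.
  - apply filter_forall. intros y. apply ex_RInt_gauss_aux.
Qed.

(* The left-hand side has derivative 0, and at t = 0 it equals atan 1. *)
Lemma gauss_int_sq_add_aux t : gauss_int t ^ 2 + gauss_aux_int t = PI / 4.
Proof.
  set (H := fun t => gauss_int t ^ 2 + gauss_aux_int t).
  assert (HD : forall t, is_derive H t 0).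
  { intros u. eapply is_derive_val_R.
    - apply (is_derive_plus (fun s => gauss_int s ^ 2)); [|apply is_derive_gauss_aux_int].
      apply (is_derive_comp (fun y => y ^ 2) gauss_int); [auto_derive; auto|apply is_derive_gauss_int].
    - unfold plus, scal; simpl; unfold mult; simpl. ring. }
  assert (H0 : H 0 = PI / 4).
  { unfold H, gauss_int, gauss_aux_int. rewrite RInt_point. change (zero : R) with 0.
    rewrite (RInt_ext_R _ (fun s => / (1 + s ^ 2))).
    2: { intros x _. unfold gauss_aux. rewrite pow_i, Rmult_0_l, Ropp_0, exp_0 by lia. field.
         generalize (one_add_sq_pos x); lra. }
    rewrite (RInt_antiderivative atan).
    - rewrite atan_1, atan_0. ring.
    - intros; apply is_derive_Reals, derivable_pt_lim_atan.
    - intros x. apply (ex_derive_continuous (fun s => / (1 + s ^ 2))). auto_derive.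
      generalize (one_add_sq_pos x); lra. }
  fold (H t). rewrite <- H0. destruct (MVT_gen H 0 t (fun _ => 0)) as [c [_ Hc]].
  - intros; apply HD.
  - intros x _. apply continuity_pt_filterlim, (ex_derive_continuous H x (ex_intro _ _ (HD x))).
  - lra.
Qed.

Lemma gauss_aux_int_bounds t : 0 <= gauss_aux_int t <= gauss t.
Proof.
  unfold gauss_aux_int. split.
  - apply RInt_ge_0; [lra|apply ex_RInt_gauss_aux|]. intros s _.
    apply Rlt_le, Rdiv_lt_0_compat; [apply exp_pos|apply one_add_sq_pos].
  - apply Rle_trans with (RInt (fun _ => gauss t) 0 1).
    + apply RInt_le; [lra|apply ex_RInt_gauss_aux|apply ex_RInt_const|].
      intros s _. unfold gauss_aux, gauss.
      assert (Hs := one_add_sq_pos s).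
      assert (exp (- (t ^ 2 * (1 + s ^ 2))) <= exp (- (t ^ 2))).
      { apply exp_increasing_le. generalize (pow2_ge_0 t) (pow2_ge_0 s). nra. }
      assert (/ (1 + s ^ 2) <= 1) by (rewrite <- Rinv_1; apply Rinv_le_contravar; generalize (pow2_ge_0 s); lra).
      generalize (exp_pos (- (t ^ 2 * (1 + s ^ 2)))). unfold Rdiv. nra.
    + rewrite RInt_const. unfold scal; simpl; unfold mult; simpl. lra.
Qed.

(* gauss_int t - sqrt pi / 2 = - gauss_aux_int t / (gauss_int t + sqrt pi / 2) *)
Lemma gauss_int_tail t : 0 <= t -> Rabs (gauss_int t - sqrt PI / 2) <= 2 * gauss t / sqrt PI.
Proof.
  intros Ht.
  assert (HP : 0 < sqrt PI) by apply sqrt_lt_R0, PI_RGT_0.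
  assert (HG := gauss_int_ge0 t Ht).
  assert (E := gauss_int_sq_add_aux t).
  assert (Hs : sqrt PI * sqrt PI = PI) by (apply sqrt_sqrt; generalize PI_RGT_0; lra).
  destruct (gauss_aux_int_bounds t) as [U1 U2].
  replace (gauss_int t - sqrt PI / 2) with (- gauss_aux_int t / (gauss_int t + sqrt PI / 2)).
  - unfold Rdiv. rewrite Rabs_mult, Rabs_Ropp, Rabs_inv, !Rabs_pos_eq by lra.
    apply Rle_trans with (gauss t * / (sqrt PI * / 2)).
    + apply Rmult_le_compat; try lra; [apply Rlt_le, Rinv_0_lt_compat; lra|].
      apply Rinv_le_contravar; lra.
    + right. field. lra.
  - apply Rmult_eq_reg_r with (gauss_int t + sqrt PI / 2); [|lra].
    field_simplify; [|lra]. nra.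
Qed.

Definition bessel_integrand (nu x t : R) : R := exp (- x * cosh t) * cosh (nu * t).

Lemma continuous_bessel_integrand nu x t : continuous (bessel_integrand nu x) t.
Proof. apply (ex_derive_continuous (bessel_integrand nu x)). unfold bessel_integrand, cosh. auto_derive. auto. Qed.

Lemma ex_RInt_bessel_integrand nu x a b : ex_RInt (bessel_integrand nu x) a b.
Proof. apply (@ex_RInt_continuous R_CompleteNormedModule). intros; apply continuous_bessel_integrand. Qed.

Lemma cosh_eq_sinh_half t : cosh t = 1 + 2 * sinh (t / 2) ^ 2.
Proof.
  unfold cosh, sinh.
  replace (exp t) with (exp (t / 2) * exp (t / 2)) by (rewrite <- exp_plus; f_equal; field).
  replace (exp (- t)) with (exp (- (t / 2)) * exp (- (t / 2))) by (rewrite <- exp_plus; f_equal; field).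
  assert (exp (t / 2) * exp (- (t / 2)) = 1) by (rewrite <- exp_plus, Rplus_opp_r; apply exp_0).
  nra.
Qed.

Lemma sinh_half_ge t : 0 <= t -> t / 4 <= sinh (t / 2).
Proof.
  intros Ht. unfold sinh.
  generalize (exp_ineq1_le (t / 2)).
  assert (exp (- (t / 2)) <= 1) by (rewrite <- exp_0; apply exp_increasing_le; lra).
  lra.
Qed.

(* The substitution s = sqrt (2 x) sinh (t / 2) turns K_(1/2) into a Gaussian integral. *)
Section BesselHalf.
Variables (nu x : R).
Hypothesis Hx : 0 < x.
Hypothesis Hnu : forall t, cosh (nu * t) = cosh (t / 2).

Let r := sqrt (2 * x).
Let c := 2 * exp (- x) / r.
Let F t := c * gauss_int (r * sinh (t / 2)).

Lemma sqrt_double_pos : 0 < r.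
Proof. apply sqrt_lt_R0. lra. Qed.

Lemma is_derive_F (t : R) : is_derive F t (bessel_integrand nu x t).
Proof.
  assert (Hr := sqrt_double_pos). assert (Hrr : r * r = 2 * x) by (apply sqrt_sqrt; lra).
  eapply is_derive_val_R.
  - apply is_derive_scal, (is_derive_comp gauss_int (fun s => r * sinh (s / 2))); [apply is_derive_gauss_int|].
    unfold sinh. auto_derive; [auto|reflexivity].
  - change (scal ?u ?w) with (u * w). unfold bessel_integrand, c, gauss. rewrite Hnu, cosh_eq_sinh_half.
    replace (- ((r * sinh (t / 2)) ^ 2)) with (- (2 * x) * sinh (t / 2) ^ 2) by (rewrite <- Hrr; ring).
    replace (- x * (1 + 2 * sinh (t / 2) ^ 2)) with (- x + - (2 * x) * sinh (t / 2) ^ 2) by ring.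
    rewrite exp_plus. unfold cosh, sinh, Rdiv. field. lra.
Qed.

Lemma F_0 : F 0 = 0.
Proof.
  unfold F, gauss_int. rewrite Rdiv_0_l, sinh_0, Rmult_0_r, RInt_point. apply Rmult_0_r.
Qed.

Lemma F_lim : lim_p_infty F (sqrt (PI / (2 * x)) * exp (- x)).
Proof.
  intros eps He.
  assert (HP : 0 < sqrt PI) by apply sqrt_lt_R0, PI_RGT_0.
  assert (Hr := sqrt_double_pos).
  assert (Hc : 0 < c) by (apply Rdiv_lt_0_compat; [generalize (exp_pos (- x))|]; lra).
  assert (HB : 0 <= c * (2 / sqrt PI)) by (apply Rmult_le_pos; [|apply Rlt_le, Rdiv_lt_0_compat]; lra).
  destruct (exp_mul_small_eventually (r / 4) _ eps ltac:(lra) HB He) as [M HM].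
  exists (Rmax (Rabs M) (4 / r)). intros b Hb.
  assert (hb1 := Rle_trans _ _ _ (Rmax_l _ _) Hb). assert (hb2 := Rle_trans _ _ _ (Rmax_r _ _) Hb).
  assert (hb0 : 0 <= b) by (generalize (Rabs_pos M); lra).
  set (y := r * sinh (b / 2)).
  assert (Hy : r * (b / 4) <= y) by (apply Rmult_le_compat_l; [lra|apply sinh_half_ge; auto]).
  assert (Hy1 : 1 <= y).
  { apply Rmult_le_compat_l with (r := r) in hb2; [|lra].
    replace (r * (4 / r)) with 4 in hb2 by (field; lra). lra. }
  replace (sqrt (PI / (2 * x)) * exp (- x)) with (c * (sqrt PI / 2))
    by (unfold c, r; rewrite sqrt_div_alt by lra; field; apply Rgt_not_eq, sqrt_lt_R0; lra).
  unfold F. fold y. replace (c * gauss_int y - c * (sqrt PI / 2)) with (c * (gauss_int y - sqrt PI / 2)) by ring.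
  rewrite Rabs_mult, (Rabs_pos_eq c) by lra.
  apply Rle_lt_trans with (c * (2 * gauss y / sqrt PI)).
  { apply Rmult_le_compat_l; [lra|apply gauss_int_tail; lra]. }
  assert (Hg : gauss y <= exp (r / 4 * - b)).
  { unfold gauss. apply exp_increasing_le. nra. }
  apply Rle_lt_trans with (exp (r / 4 * - b) * (c * (2 / sqrt PI))).
  - replace (c * (2 * gauss y / sqrt PI)) with (gauss y * (c * (2 / sqrt PI))) by (field; lra).
    apply Rmult_le_compat_r; auto.
  - apply HM. generalize (Rle_abs M). lra.
Qed.

Lemma improper_integral_bessel_half :
  improper_integral_0_inf (bessel_integrand nu x) (sqrt (PI / (2 * x)) * exp (- x)).
Proof.
  apply improper_integral_0_inf_RInt. split; [intros; apply ex_RInt_bessel_integrand|].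
  replace (sqrt (PI / (2 * x)) * exp (- x)) with (sqrt (PI / (2 * x)) * exp (- x) - F 0) by (rewrite F_0; ring).
  apply (lim_0_inf_ext _ (fun a b => F b - F a)).
  - intros a b _ _. apply RInt_antiderivative; [apply is_derive_F|apply continuous_bessel_integrand].
  - apply lim_0_inf_increment; [|apply F_lim].
    apply lim_0_right_continuous, (ex_derive_continuous F 0 (ex_intro _ _ (is_derive_F 0))).
Qed.

End BesselHalf.

Lemma cosh_add_sub_cosh_sub A B : cosh (A + B) - cosh (A - B) = 2 * sinh A * sinh B.
Proof.
  unfold cosh, sinh, Rminus. rewrite !Ropp_plus_distr, Ropp_involutive, !exp_plus. field.
Qed.

Lemma cosh_ge_sq t : 0 <= t -> t ^ 2 / 8 <= cosh t.
Proof.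
  intros Ht. unfold cosh.
  replace (exp t) with (exp (t / 2) * exp (t / 2)) by (rewrite <- exp_plus; f_equal; field).
  generalize (exp_ineq1_le (t / 2)) (exp_pos (- t)). nra.
Qed.

Lemma Rabs_sinh_le y : Rabs (sinh y) <= exp (Rabs y).
Proof.
  unfold sinh.
  assert (exp y <= exp (Rabs y)) by apply exp_increasing_le, Rle_abs.
  assert (exp (- y) <= exp (Rabs y)) by (apply exp_increasing_le; rewrite <- Rabs_Ropp; apply Rle_abs).
  generalize (exp_pos y) (exp_pos (- y)). unfold Rabs at 1. destruct Rcase_abs; lra.
Qed.

(* K_(nu+1) - K_(nu-1) - (2 nu / x) K_nu integrates the derivative of
   -2 exp (- x cosh t) sinh (nu t) / x, which vanishes at 0 and at +oo. *)
Section BesselRecurrence.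
Variables (nu x : R).
Hypothesis Hx : 0 < x.

Let H t := - 2 * exp (- x * cosh t) * sinh (nu * t) / x.
Let dH t := bessel_integrand (nu + 1) x t - bessel_integrand (nu - 1) x t
            - 2 * nu / x * bessel_integrand nu x t.

Lemma is_derive_H (t : R) : is_derive H t (dH t).
Proof.
  unfold H, dH, bessel_integrand.
  replace (exp (- x * cosh t) * cosh ((nu + 1) * t) - exp (- x * cosh t) * cosh ((nu - 1) * t))
    with (exp (- x * cosh t) * (2 * sinh (nu * t) * sinh t))
    by (rewrite <- cosh_add_sub_cosh_sub; replace (nu * t + t) with ((nu + 1) * t) by ring; replace (nu * t - t) with ((nu - 1) * t) by ring; ring).
  unfold cosh, sinh. auto_derive; auto. unfold Rdiv. field. lra.
Qed.

Lemma continuous_dH t : continuous dH t.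
Proof. apply (ex_derive_continuous dH). unfold dH, bessel_integrand, cosh. auto_derive. auto. Qed.

Lemma H_0 : H 0 = 0.
Proof. unfold H. rewrite Rmult_0_r, sinh_0. field. lra. Qed.

Lemma H_lim : lim_p_infty H 0.
Proof.
  intros eps He.
  destruct (exp_mul_small_eventually 1 (2 / x) eps) as [M HM];
    [lra|apply Rlt_le, Rdiv_lt_0_compat; lra|auto|].
  exists (Rmax (Rabs M) (8 * (Rabs nu + 1) / x)). intros b Hb.
  assert (hb1 := Rle_trans _ _ _ (Rmax_l _ _) Hb). assert (hb2 := Rle_trans _ _ _ (Rmax_r _ _) Hb).
  assert (hb0 : 0 <= b) by (generalize (Rabs_pos M); lra).
  assert (Hc : (Rabs nu + 1) * b <= x * cosh b).
  { assert (8 * (Rabs nu + 1) <= x * b).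
    { apply Rmult_le_compat_l with (r := x) in hb2; [|lra].
      replace (x * (8 * (Rabs nu + 1) / x)) with (8 * (Rabs nu + 1)) in hb2 by (field; lra). lra. }
    assert (x * (b ^ 2 / 8) <= x * cosh b) by (apply Rmult_le_compat_l; [lra|apply cosh_ge_sq; auto]).
    generalize (Rabs_pos nu). nra. }
  assert (Hs : Rabs (sinh (nu * b)) <= exp (Rabs nu * b)).
  { eapply Rle_trans; [apply Rabs_sinh_le|]. apply exp_increasing_le.
    rewrite Rabs_mult, (Rabs_pos_eq b); lra. }
  unfold H. rewrite Rminus_0_r.
  replace (- 2 * exp (- x * cosh b) * sinh (nu * b) / x)
    with (- (2 / x) * (exp (- x * cosh b) * sinh (nu * b))) by (field; lra).
  rewrite Rabs_mult, Rabs_Ropp, Rabs_mult, (Rabs_pos_eq (2 / x)), (Rabs_pos_eq (exp _))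
    by (apply Rlt_le; first [apply exp_pos | apply Rdiv_lt_0_compat; lra]).
  apply Rle_lt_trans with (exp (1 * - b) * (2 / x)); [|apply HM; generalize (Rle_abs M); lra].
  rewrite (Rmult_comm (exp (1 * - b))). apply Rmult_le_compat_l; [apply Rlt_le, Rdiv_lt_0_compat; lra|].
  apply Rle_trans with (exp (- x * cosh b) * exp (Rabs nu * b)).
  - apply Rmult_le_compat_l; [apply Rlt_le, exp_pos|auto].
  - rewrite <- exp_plus. apply exp_increasing_le. lra.
Qed.

Lemma improper_integral_bessel_rec l0 l1 :
  improper_integral_0_inf (bessel_integrand (nu - 1) x) l0 ->
  improper_integral_0_inf (bessel_integrand nu x) l1 ->
  improper_integral_0_inf (bessel_integrand (nu + 1) x) (l0 + 2 * nu / x * l1).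
Proof.
  intros [_ I0]%improper_integral_0_inf_RInt [_ I1]%improper_integral_0_inf_RInt.
  apply improper_integral_0_inf_RInt. split; [intros; apply ex_RInt_bessel_integrand|].
  replace (l0 + 2 * nu / x * l1) with (l0 + 2 * nu / x * l1 + (0 - H 0)) by (rewrite H_0; ring).
  apply (lim_0_inf_ext _ (fun a b => RInt (bessel_integrand (nu - 1) x) a b
                                     + 2 * nu / x * RInt (bessel_integrand nu x) a b + (H b - H a))).
  - intros a b _ _.
    rewrite <- (RInt_antiderivative H dH a b is_derive_H continuous_dH).
    apply is_RInt_unique.
    apply (is_RInt_ext (fun t => plus (plus (bessel_integrand (nu - 1) x t)
                                           (scal (2 * nu / x) (bessel_integrand nu x t))) (dH t))).
    { intros t _. unfold dH, plus, scal; simpl; unfold mult; simpl. ring. }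
    apply (is_RInt_plus (V := R_NormedModule)); [apply (is_RInt_plus (V := R_NormedModule))|].
    + apply (RInt_correct (V := R_CompleteNormedModule)), ex_RInt_bessel_integrand.
    + apply (is_RInt_scal (V := R_NormedModule)), (RInt_correct (V := R_CompleteNormedModule)),
        ex_RInt_bessel_integrand.
    + apply (RInt_correct (V := R_CompleteNormedModule)), (@ex_RInt_continuous R_CompleteNormedModule).
      intros; apply continuous_dH.
  - apply lim_0_inf_lin; auto. apply lim_0_inf_increment; [|apply H_lim].
    apply lim_0_right_continuous, (ex_derive_continuous H 0 (ex_intro _ _ (is_derive_H 0))).
Qed.

End BesselRecurrence.

Lemma improper_integral_bessel_half_int n x : 0 < x ->
  improper_integral_0_inf (bessel_integrand (INR n + / 2) x) (sqrt (PI / (2 * x)) * phi n x / x ^ n).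
Proof.
  intros Hx.
  assert (Hbase : forall nu, (forall t, cosh (nu * t) = cosh (t / 2)) ->
            improper_integral_0_inf (bessel_integrand nu x) (sqrt (PI / (2 * x)) * phi 0 x / x ^ 0)).
  { intros nu Hnu. replace (sqrt (PI / (2 * x)) * phi 0 x / x ^ 0) with (sqrt (PI / (2 * x)) * exp (- x))
      by (simpl; field). apply improper_integral_bessel_half; auto. }
  assert (Hhalf : forall t, cosh (/ 2 * t) = cosh (t / 2)) by (intros; f_equal; field).
  induction n as [| | n IH1 IH2] using nat_ind2.
  - apply Hbase. intros. simpl. rewrite Rplus_0_l. auto.
  - replace (INR 1 + / 2) with (/ 2 + 1) by (simpl; field).
    replace (sqrt (PI / (2 * x)) * phi 1 x / x ^ 1)
      with (sqrt (PI / (2 * x)) * phi 0 x / x ^ 0 + 2 * / 2 / x * (sqrt (PI / (2 * x)) * phi 0 x / x ^ 0))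
      by (simpl; field; lra).
    apply improper_integral_bessel_rec; auto; apply Hbase; auto.
    intros t. unfold cosh. replace ((/ 2 - 1) * t) with (- (t / 2)) by field.
    rewrite Ropp_involutive. field.
  - replace (INR (S (S n)) + / 2) with ((INR (S n) + / 2) + 1) by (rewrite !S_INR; ring).
    replace (sqrt (PI / (2 * x)) * phi (S (S n)) x / x ^ S (S n))
      with (sqrt (PI / (2 * x)) * phi n x / x ^ n
            + 2 * (INR (S n) + / 2) / x * (sqrt (PI / (2 * x)) * phi (S n) x / x ^ S n)).
    + apply improper_integral_bessel_rec; auto.
      replace (INR (S n) + / 2 - 1) with (INR n + / 2) by (rewrite S_INR; ring). auto.
    + rewrite phi_SS, !S_INR. simpl pow.
      assert (x ^ n <> 0) by (apply pow_nonzero; lra). field. lra.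
Qed.

Lemma BesselK_half_int n x : 0 < x ->
  BesselK (INR n + / 2) x = sqrt (PI / (2 * x)) * phi n x / x ^ n.
Proof. intros Hx. apply Int_0_inf_eq, improper_integral_bessel_half_int, Hx. Qed.

Definition gamma_integrand (s t : R) : R := Rpower t (s - 1) * exp (- t).

Lemma Rpower_pos x y : 0 < Rpower x y.
Proof. apply exp_pos. Qed.

Lemma gamma_integrand_pos s t : 0 < gamma_integrand s t.
Proof. apply Rmult_lt_0_compat; [apply Rpower_pos|apply exp_pos]. Qed.

Lemma is_derive_Rpower_l (t y : R) : 0 < t -> is_derive (fun u => Rpower u y) t (y * Rpower t (y - 1)).
Proof. intros. apply is_derive_Reals, derivable_pt_lim_power. auto. Qed.

Lemma continuous_gamma_integrand s t : 0 < t -> continuous (gamma_integrand s) t.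
Proof.
  intros Ht. apply (continuous_mult (fun u => Rpower u (s - 1)) (fun u => exp (- u))).
  - exact (ex_derive_continuous _ _ (ex_intro _ _ (is_derive_Rpower_l t (s - 1) Ht))).
  - apply (ex_derive_continuous (fun u => exp (- u))). auto_derive. auto.
Qed.

Lemma ex_RInt_gamma_integrand s a b : 0 < a -> a <= b -> ex_RInt (gamma_integrand s) a b.
Proof.
  intros. apply (@ex_RInt_continuous R_CompleteNormedModule). intros z Hz.
  rewrite Rmin_left in Hz by lra. apply continuous_gamma_integrand. lra.
Qed.

(* t ^ s <= (2 s / e) ^ s * exp (t / 2), from ln y <= y - 1 at y = t / (2 s). *)
Definition Rpower_exp_half_const (s : R) : R := exp (s * ln (2 * s) - s).

Lemma Rpower_le_exp_half s t : 0 < s -> 0 < t -> Rpower t s <= Rpower_exp_half_const s * exp (t / 2).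
Proof.
  intros Hs Ht. unfold Rpower, Rpower_exp_half_const. rewrite <- exp_plus. apply exp_increasing_le.
  assert (Hl : ln (t / (2 * s)) <= t / (2 * s) - 1).
  { generalize (exp_ineq1_le (ln (t / (2 * s)))). rewrite exp_ln by (apply Rdiv_lt_0_compat; lra). lra. }
  rewrite ln_div in Hl by lra.
  apply Rmult_le_compat_l with (r := s) in Hl; [|lra].
  replace (s * (t / (2 * s) - 1)) with (t / 2 - s) in Hl by (field; lra). lra.
Qed.

Lemma Rpower_mul_exp_le s t : 0 < s -> 0 < t ->
  Rpower t s * exp (- t) <= Rpower_exp_half_const s * exp (- (t / 2)).
Proof.
  intros Hs Ht. apply Rle_trans with (Rpower_exp_half_const s * exp (t / 2) * exp (- t)).
  - apply Rmult_le_compat_r; [apply Rlt_le, exp_pos|apply Rpower_le_exp_half; auto].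
  - rewrite Rmult_assoc, <- exp_plus. right. do 2 f_equal. field.
Qed.

Section GammaRecurrence.
Variable s : R.
Hypothesis Hs : 0 < s.

Let P t := - Rpower t s * exp (- t).

Lemma is_derive_P (t : R) : 0 < t ->
  is_derive P t (gamma_integrand (s + 1) t - s * gamma_integrand s t).
Proof.
  intros Ht. unfold P, gamma_integrand. replace (s + 1 - 1) with s by ring.
  eapply is_derive_val_R.
  - apply (is_derive_mult (fun u => - Rpower u s) (fun u => exp (- u))); [| |intros; apply Rmult_comm].
    + apply (is_derive_opp (fun u => Rpower u s)), is_derive_Rpower_l, Ht.
    + auto_derive; auto.
  - unfold plus, mult, opp; simpl. ring.
Qed.

Lemma RInt_gamma_integrand_succ a b : 0 < a -> a <= b ->
  @eq R (RInt (gamma_integrand (s + 1)) a b) (s * RInt (gamma_integrand s) a b + (P b - P a)).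
Proof.
  intros Ha Hab.
  set (dP t := gamma_integrand (s + 1) t - s * gamma_integrand s t).
  assert (HdP : forall t, 0 < t -> continuous dP t).
  { intros t Ht. apply (continuous_minus (gamma_integrand (s + 1)) (fun u => s * gamma_integrand s u)).
    - apply continuous_gamma_integrand, Ht.
    - apply (continuous_scal_r s (gamma_integrand s)), continuous_gamma_integrand, Ht. }
  rewrite <- (RInt_antiderivative_on P dP a b).
  - apply is_RInt_unique.
    apply (is_RInt_ext (fun t => plus (scal s (gamma_integrand s t)) (dP t))).
    { intros t _. unfold dP, plus, scal; simpl; unfold mult; simpl. ring. }
    apply (is_RInt_plus (V := R_NormedModule)).
    + apply (is_RInt_scal (V := R_NormedModule)), (RInt_correct (V := R_CompleteNormedModule)).
      apply ex_RInt_gamma_integrand; auto.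
    + apply (RInt_correct (V := R_CompleteNormedModule)), (@ex_RInt_continuous R_CompleteNormedModule).
      intros z Hz. rewrite Rmin_left in Hz by lra. apply HdP. lra.
  - intros t Ht. rewrite Rmin_left in Ht by lra. apply is_derive_P. lra.
  - intros t Ht. rewrite Rmin_left in Ht by lra. apply HdP. lra.
Qed.

Lemma P_lim_0 : lim_0_right P 0.
Proof.
  intros eps He. exists (Rpower (eps / 2) (/ s)). split; [apply Rpower_pos|].
  intros a [Ha Had]. rewrite Rminus_0_r. unfold P.
  rewrite Rabs_mult, Rabs_Ropp, !Rabs_pos_eq by (apply Rlt_le; first [apply Rpower_pos|apply exp_pos]).
  assert (Rpower a s < eps / 2).
  { replace (eps / 2) with (Rpower (Rpower (eps / 2) (/ s)) s).
    - apply Rlt_Rpower_l; auto.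
    - rewrite Rpower_mult, Rinv_l, Rpower_1; lra. }
  assert (exp (- a) <= 1) by (rewrite <- exp_0; apply exp_increasing_le; lra).
  generalize (Rpower_pos a s). nra.
Qed.

Lemma P_lim_p_infty : lim_p_infty P 0.
Proof.
  intros eps He.
  destruct (exp_mul_small_eventually (/ 2) (Rpower_exp_half_const s) eps) as [M HM];
    [lra|apply Rlt_le, exp_pos|auto|].
  exists (Rmax (Rabs M) 1). intros b Hb.
  assert (hb1 := Rle_trans _ _ _ (Rmax_l _ _) Hb). assert (hb2 := Rle_trans _ _ _ (Rmax_r _ _) Hb).
  rewrite Rminus_0_r. unfold P.
  rewrite Rabs_mult, Rabs_Ropp, !Rabs_pos_eq by (apply Rlt_le; first [apply Rpower_pos|apply exp_pos]).
  eapply Rle_lt_trans; [apply Rpower_mul_exp_le; lra|].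
  replace (- (b / 2)) with (/ 2 * - b) by field. rewrite Rmult_comm.
  apply HM. generalize (Rle_abs M); lra.
Qed.

Lemma improper_integral_gamma_succ l :
  improper_integral_0_inf (gamma_integrand s) l ->
  improper_integral_0_inf (gamma_integrand (s + 1)) (s * l).
Proof.
  intros [_ Hl]%improper_integral_0_inf_RInt.
  apply improper_integral_0_inf_RInt. split; [intros; apply ex_RInt_gamma_integrand; auto|].
  replace (s * l) with (0 + s * l + (0 - 0)) by ring.
  apply (lim_0_inf_ext _ (fun a b => 0 + s * RInt (gamma_integrand s) a b + (P b - P a))).
  - intros a b Ha Hab. rewrite RInt_gamma_integrand_succ by auto. ring.
  - apply lim_0_inf_lin; auto.
    + intros eps He. exists 1. split; [lra|]. exists 0. intros. rewrite Rminus_diag, Rabs_R0. auto.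
    + apply lim_0_inf_increment; [apply P_lim_0|apply P_lim_p_infty].
Qed.

Lemma RInt_gamma_integrand_le a b : 0 < a -> a <= b ->
  RInt (gamma_integrand s) a b <= 3 * Rpower_exp_half_const s / s.
Proof.
  intros Ha Hab.
  set (Ks := Rpower_exp_half_const s).
  assert (HK : 0 < Ks) by apply exp_pos.
  assert (E := RInt_gamma_integrand_succ a b Ha Hab). unfold P in E.
  assert (B1 : RInt (gamma_integrand (s + 1)) a b <= 2 * Ks).
  { apply Rle_trans with (RInt (fun t => Ks * exp (- (t / 2))) a b).
    - apply RInt_le; auto; [apply ex_RInt_gamma_integrand; auto| |].
      + apply (@ex_RInt_continuous R_CompleteNormedModule). intros.
        apply (ex_derive_continuous (fun t => Ks * exp (- (t / 2)))). auto_derive. auto.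
      + intros t Ht. unfold gamma_integrand. replace (s + 1 - 1) with s by ring.
        apply Rpower_mul_exp_le; lra.
    - rewrite (RInt_antiderivative (fun t => - 2 * Ks * exp (- (t / 2)))).
      + generalize (exp_pos (- (b / 2))).
        assert (exp (- (a / 2)) <= 1) by (rewrite <- exp_0; apply exp_increasing_le; lra). nra.
      + intros t. auto_derive; auto. unfold Rdiv. field.
      + intros t. apply (ex_derive_continuous (fun t => Ks * exp (- (t / 2)))). auto_derive. auto. }
  assert (B2 : Rpower b s * exp (- b) <= Ks).
  { eapply Rle_trans; [apply Rpower_mul_exp_le; lra|]. fold Ks.
    assert (exp (- (b / 2)) <= 1) by (rewrite <- exp_0; apply exp_increasing_le; lra). nra. }
  assert (B3 : 0 <= Rpower a s * exp (- a)) by (apply Rlt_le, Rmult_lt_0_compat; [apply Rpower_pos|apply exp_pos]).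
  apply Rmult_le_reg_l with s; [auto|].
  replace (s * (3 * Ks / s)) with (3 * Ks) by (field; lra). lra.
Qed.

End GammaRecurrence.

Lemma RInt_gamma_integrand_le_widen s a b a' b' : 0 < a' -> a' <= a -> a <= b -> b <= b' ->
  RInt (gamma_integrand s) a b <= RInt (gamma_integrand s) a' b'.
Proof.
  intros.
  assert (Hex : forall u v, a' <= u -> u <= v -> ex_RInt (gamma_integrand s) u v)
    by (intros; apply ex_RInt_gamma_integrand; lra).
  assert (Hpos : forall u v, a' <= u -> u <= v -> 0 <= RInt (gamma_integrand s) u v)
    by (intros; apply RInt_ge_0; auto; intros; apply Rlt_le, gamma_integrand_pos).
  rewrite <- (RInt_Chasles (gamma_integrand s) a' a b'), <- (RInt_Chasles (gamma_integrand s) a b b')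
    by (apply Hex; lra).
  generalize (Hpos a' a ltac:(lra) ltac:(lra)) (Hpos b b' ltac:(lra) ltac:(lra)).
  unfold plus; simpl. lra.
Qed.

(* The integrals over [a, b] increase as a -> 0 and b -> +oo and are bounded,
   so they converge to their supremum. *)
Lemma improper_integral_gamma_exists s : 0 < s ->
  exists l, 0 < l /\ improper_integral_0_inf (gamma_integrand s) l.
Proof.
  intros Hs.
  set (E := fun y => exists a b, 0 < a /\ a <= b /\ y = RInt (gamma_integrand s) a b).
  assert (HE : bound E).
  { exists (3 * Rpower_exp_half_const s / s). intros y (a & b & Ha & Hab & ->).
    apply RInt_gamma_integrand_le; auto. }
  assert (H12 : E (RInt (gamma_integrand s) 1 2)) by (exists 1, 2; repeat split; lra).
  destruct (completeness E HE (ex_intro _ _ H12)) as [l [Hub Hlub]].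
  exists l. split.
  { apply Rlt_le_trans with (RInt (gamma_integrand s) 1 2); [|apply Hub, H12].
    apply RInt_gt_0; [lra|intros; apply gamma_integrand_pos|intros; apply continuous_gamma_integrand; lra]. }
  apply improper_integral_0_inf_RInt. split; [intros; apply ex_RInt_gamma_integrand; auto|].
  intros eps Heps.
  destruct (classic (exists y, E y /\ l - eps < y)) as [(y & (a0 & b0 & Ha0 & Hab0 & ->) & Hy)|Hn].
  - exists a0. split; auto. exists b0. intros a b Ha Hab Had Hbm.
    assert (RInt (gamma_integrand s) a0 b0 <= RInt (gamma_integrand s) a b)
      by (apply RInt_gamma_integrand_le_widen; lra).
    assert (RInt (gamma_integrand s) a b <= l) by (apply Hub; exists a, b; repeat split; lra).
    rewrite Rabs_left1 by lra. lra.
  - exfalso. enough (l <= l - eps) by lra. apply Hlub. intros y Hy.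
    destruct (Rle_dec y (l - eps)) as [|Hgt]; auto. exfalso. apply Hn. exists y. split; [auto|lra].
Qed.

Lemma improper_integral_gamma_1 : improper_integral_0_inf (gamma_integrand 1) 1.
Proof.
  assert (Eg : forall t, gamma_integrand 1 t = exp (- t)).
  { intros t. unfold gamma_integrand, Rpower. rewrite Rminus_diag, Rmult_0_l, exp_0. ring. }
  apply improper_integral_0_inf_RInt. split; [intros; apply ex_RInt_gamma_integrand; auto|].
  replace 1 with (0 - - exp (- 0)) at 2 by (rewrite Ropp_0, exp_0; ring).
  apply (lim_0_inf_ext _ (fun a b => - exp (- b) - - exp (- a))).
  - intros a b _ _. apply (RInt_antiderivative (fun t => - exp (- t))).
    + intros t. rewrite Eg. auto_derive; auto. ring.
    + intros t. apply (continuous_ext (fun t => exp (- t))); [intros; rewrite Eg; auto|].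
      apply (ex_derive_continuous (fun t => exp (- t))). auto_derive. auto.
  - apply (lim_0_inf_increment (fun t => - exp (- t))).
    + apply (lim_0_right_continuous (fun t => - exp (- t))).
      apply (ex_derive_continuous (fun t => - exp (- t))). auto_derive. auto.
    + intros eps He. destruct (exp_mul_small_eventually 1 1 eps) as [M HM]; try lra.
      exists (Rabs M). intros b Hb.
      rewrite Rminus_0_r, Rabs_Ropp, Rabs_pos_eq by apply Rlt_le, exp_pos.
      specialize (HM (- b)). rewrite Rmult_1_l, Rmult_1_r in HM. apply HM. generalize (Rle_abs M); lra.
Qed.

Lemma Gamma_eq s l : improper_integral_0_inf (gamma_integrand s) l -> Gamma s = l.
Proof. apply Int_0_inf_eq. Qed.

Lemma improper_integral_gamma_add_nat s l n : 0 < s ->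
  improper_integral_0_inf (gamma_integrand s) l ->
  improper_integral_0_inf (gamma_integrand (s + INR n)) (l * pochhammer s n).
Proof.
  intros Hs Hl. induction n; simpl pochhammer.
  - rewrite Rplus_0_r, Rmult_1_r. auto.
  - rewrite S_INR, <- Rplus_assoc.
    replace (l * (pochhammer s n * (s + INR n))) with ((s + INR n) * (l * pochhammer s n)) by ring.
    apply improper_integral_gamma_succ; auto. generalize (pos_INR n); lra.
Qed.

Lemma Gamma_add_nat s n : 0 < s -> Gamma (s + INR n) = Gamma s * pochhammer s n /\ 0 < Gamma s.
Proof.
  intros Hs. destruct (improper_integral_gamma_exists s Hs) as [l [Hl HI]].
  rewrite (Gamma_eq s l HI). split; auto.
  apply Gamma_eq, improper_integral_gamma_add_nat; auto.
Qed.

Lemma Gamma_nat_succ n : Gamma (INR (S n)) = INR (Factorial.fact n).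
Proof.
  rewrite S_INR, Rplus_comm. apply Gamma_eq.
  replace (INR (Factorial.fact n)) with (1 * pochhammer 1 n).
  - apply improper_integral_gamma_add_nat; [lra|apply improper_integral_gamma_1].
  - rewrite Rmult_1_l. induction n; simpl pochhammer; [reflexivity|].
    rewrite IHn, fact_simpl, mult_INR, S_INR. ring.
Qed.

Lemma conv_pow_exp_phi C a k xi : 0 < a ->
  conv_pow (fun xi => C * exp (- a * Rabs xi)) (S k) xi
  = C * (C / (2 * PI * a)) ^ k / INR (Factorial.fact k) * phi k (a * Rabs xi).
Proof.
  intros Ha. revert xi. induction k as [|k IH]; intros xi.
  - simpl. rewrite Ropp_mult_distr_l. field.
  - change (conv_pow (fun xi => C * exp (- a * Rabs xi)) (S (S k)) xi)
      with (conv (conv_pow (fun xi => C * exp (- a * Rabs xi)) (S k)) (fun xi => C * exp (- a * Rabs xi)) xi).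
    set (c := C * (C / (2 * PI * a)) ^ k / INR (Factorial.fact k)) in IH.
    unfold conv.
    replace (fun eta => conv_pow (fun xi => C * exp (- a * Rabs xi)) (S k) eta * (C * exp (- a * Rabs (xi - eta))))
      with (fun eta => (c * C) * phi k (a * Rabs eta) * exp (- a * Rabs (xi - eta)))
      by (apply functional_extensionality; intros eta; rewrite IH; ring).
    rewrite (Int_R_eq _ _ (improper_integral_phi_exp k a (c * C) xi Ha)).
    unfold c. rewrite fact_simpl, mult_INR, S_INR. simpl pow.
    generalize PI_RGT_0 (pos_INR k) (INR_fact_neq_0 k). intros. field. repeat split; lra.
Qed.

Lemma conv_pow_exp_BesselK C a n xi : 0 <= C -> 0 < a -> xi <> 0 ->
  conv_pow (fun xi => C * exp (- a * Rabs xi)) (S n) xi =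
    2 * sqrt (a * C) * Rpower (C * Rabs xi / (2 * PI)) (INR (S n) - / 2)
      * BesselK (INR (S n) - / 2) (a * Rabs xi) / Gamma (INR (S n)).
Proof.
  intros HC Ha Hxi.
  assert (HP := PI_RGT_0). assert (Hf := INR_fact_neq_0 n). assert (Habs := Rabs_pos_lt _ Hxi).
  set (x := a * Rabs xi). assert (Hx : 0 < x) by (apply Rmult_lt_0_compat; auto).
  rewrite conv_pow_exp_phi, Gamma_nat_succ by auto. fold x.
  replace (INR (S n) - / 2) with (INR n + / 2) by (rewrite S_INR; field).
  rewrite BesselK_half_int by auto.
  destruct (Req_dec C 0) as [->|HC0]; [rewrite Rmult_0_r, sqrt_0; unfold Rdiv; ring|].
  set (y := C * Rabs xi / (2 * PI)).
  assert (Hy : 0 < y) by (apply Rdiv_lt_0_compat; [apply Rmult_lt_0_compat|]; lra).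
  assert (Hyx : y = C / (2 * PI * a) * x) by (unfold y, x; field; lra). clearbody x y.
  rewrite Rpower_plus, Rpower_pow, Rpower_sqrt by auto.
  assert (Hroots : sqrt (a * C) * sqrt y * sqrt (PI / (2 * x)) = C / 2).
  { rewrite <- !sqrt_mult by first [apply Rlt_le, Rdiv_lt_0_compat; lra | repeat apply Rmult_le_pos; lra].
    replace (a * C * y * (PI / (2 * x))) with ((C / 2) ^ 2) by (rewrite Hyx; field; lra).
    apply sqrt_pow2. lra. }
  assert (Hxn : x ^ n <> 0) by (apply pow_nonzero; lra).
  transitivity (2 * (sqrt (a * C) * sqrt y * sqrt (PI / (2 * x))) * (y ^ n / x ^ n) * phi n x
                / INR (Factorial.fact n)); [|field; auto].
  rewrite Hroots, Hyx, Rpow_mult_distr. field. auto.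
Qed.

Lemma conv_pow_exp_le C a n xi : 0 <= C -> 0 < a ->
  conv_pow (fun xi => C * exp (- a * Rabs xi)) (S n) xi <=
    C * exp (- a * Rabs xi) * (C / (PI * a)) ^ (S n - 1)
      * Gamma ((1 + a * Rabs xi) / 2 + INR (S n) - 1)
      / (Gamma (INR (S n)) * Gamma ((1 + a * Rabs xi) / 2)).
Proof.
  intros HC Ha.
  assert (HP := PI_RGT_0). assert (Hf := INR_fact_neq_0 n). assert (Hf' := pos_INR (Factorial.fact n)).
  set (x := a * Rabs xi). assert (Hx : 0 <= x) by (apply Rmult_le_pos; [lra|apply Rabs_pos]).
  rewrite conv_pow_exp_phi, Gamma_nat_succ by auto. fold x.
  replace ((1 + x) / 2 + INR (S n) - 1) with ((1 + x) / 2 + INR n) by (rewrite S_INR; ring).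
  destruct (Gamma_add_nat ((1 + x) / 2) n ltac:(lra)) as [-> HG].
  replace (S n - 1)%nat with n by lia.
  assert (Hc : 0 <= C * (C / (2 * PI * a)) ^ n / INR (Factorial.fact n)).
  { apply Rmult_le_pos; [apply Rmult_le_pos; [lra|apply pow_le]|apply Rlt_le, Rinv_0_lt_compat; lra].
    apply Rmult_le_pos, Rlt_le, Rinv_0_lt_compat; nra. }
  eapply Rle_trans; [apply Rmult_le_compat_l, phi_le_exp_pochhammer; auto|].
  right. replace (C / (PI * a)) with (C / (2 * PI * a) * 2) by (field; lra).
  replace (- a * Rabs xi) with (- x) by (unfold x; ring).
  rewrite Rpow_mult_distr. field. lra.
Qed.

Theorem mainTheorem7 (C a : R) (hC : 0 <= C) (ha : 0 < a) (m : nat) (hm : (1 <= m)%nat) :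
  let g := fun xi : R => C * exp (- a * Rabs xi) in
  (forall xi : R, xi <> 0 ->
     conv_pow g m xi =
       2 * sqrt (a * C) * Rpower (C * Rabs xi / (2 * PI)) (INR m - / 2)
         * BesselK (INR m - / 2) (a * Rabs xi) / Gamma (INR m)) /\
  (forall xi : R,
     conv_pow g m xi <=
       C * exp (- a * Rabs xi) * (C / (PI * a)) ^ (m - 1)
         * Gamma ((1 + a * Rabs xi) / 2 + INR m - 1)
         / (Gamma (INR m) * Gamma ((1 + a * Rabs xi) / 2))).
Proof.
  intros g. destruct m as [|n]; [lia|]. split.
  - intros xi Hxi. apply conv_pow_exp_BesselK; auto.
  - intros xi. apply conv_pow_exp_le; auto.
Qed.
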